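(* In the standing setting, suppose $0<\alpha_k\le\frac1{2M\tilde L}$ for all $k\ge0$. Fix $\ell\in\{1,\dots,N\}$ and $n\ge0$, and define the numbers $A_k,B_k,C_k$ ($0\le k\le n$) as in the context. Then for every $k\in\{0,\dots,n\}$, almost surely $$\mathbb{E}[\langle x_{n+1}-x_*,v_\ell\rangle^2\mid x_k]\le A_k\langle x_k-x_*,v_\ell\rangle^2+B_k\|x_k-x_*\|^2+C_k.$$ In particular (case $k=0$), $\mathbb{E}[\langle x_{n+1}-x_*,v_\ell\rangle^2]\le A_0\langle x_0-x_*,v_\ell\rangle^2+B_0\|x_0-x_*\|^2+C_0$.
   Context: Standing setting: $M\ge N$, $A\in\mathbb{R}^{M\times N}$ of full column rank with rows $a_1,\dots,a_M$, $b\in\mathbb{R}^M$, $F(x)=\tfrac12\|Ax-b\|^2$, $x_*$ the unique minimizer, $F_*=F(x_* )$. Singular values $\sigma_1\ge\dots\ge\sigma_N>0$ with orthonormal right singular vectors $v_1,\dots,v_N$; $\sigma_{\max}=\sigma_1$, $\sigma_{\min}=\sigma_N$, $c(A)=\sigma_{\max}^2/\sigma_{\min}^2$, $\tilde L=\max_i\|a_i\|^2$. $f_i(x)=\frac M2(\langle a_i,x\rangle-b_i)^2$; $\sigma^2=\frac1M\sum_i\|\nabla f_i(x_* )\|^2$. SGD: deterministic $x_0$, deterministic step sizes $\alpha_k>0$, $i_k$ i.i.d. uniform on $\{1,\dots,M\}$, $x_{k+1}=x_k-\alpha_k\nabla f_{i_k}(x_k)$. For $\alpha>0$ put $A(\alpha)=1-2\alpha\sigma_\ell^2$,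 $B(\alpha)=\alpha^2M\tilde Lc(A)\sigma_{\max}^2$, $C(\alpha)=2\alpha^2M\tilde LF_*$, $p(\alpha)=1-\alpha\sigma_{\min}^2$, $q(\alpha)=2\alpha^2\sigma^2$. For fixed $n$ and $0\le k\le n$: $A_k=\prod_{i=k}^nA(\alpha_i)$; $B_k=\sum_{j=k}^n\Big(\prod_{i=j+1}^nA(\alpha_i)\Big)B(\alpha_j)\Big(\prod_{i=k}^{j-1}p(\alpha_i)\Big)$; $C_k=\sum_{i=k+1}^n\big(q(\alpha_{i-1})B_i+A_iC(\alpha_{i-1})\big)+C(\alpha_n)$ (empty products equal $1$, empty sums $0$). *)

From HB Require Import structures.
From mathcomp Require Import all_boot all_order all_algebra.
From mathcomp Require Import reals.
Set Implicit Arguments. Unset Strict Implicit. Unset Printing Implicit Defensive.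
Import Order.TTheory GRing.Theory Num.Theory.
Local Open Scope ring_scope.

Section SGD.
Variable R : realType.

Definition dotv (N : nat) (u w : 'cV[R]_N) : R := \sum_(i < N) u i 0 * w i 0.
Definition norm2 (N : nat) (u : 'cV[R]_N) : R := dotv u u.

Variables (M N : nat) (A : 'M[R]_(M, N)) (b : 'cV[R]_M).

Definition arow (i : 'I_M) : 'cV[R]_N := (row i A)^T.

Definition lsF (x : 'cV[R]_N) : R := 2^-1 * norm2 (A *m x - b).

Definition f_i (i : 'I_M) (x : 'cV[R]_N) : R :=
  (M%:R / 2) * (dotv (arow i) x - b i 0) ^+ 2.
Definition grad_f (i : 'I_M) (x : 'cV[R]_N) : 'cV[R]_N :=
  (M%:R * (dotv (arow i) x - b i 0)) *: arow i.

Definition Ltilde : R := \big[Num.max/0]_(i < M) norm2 (arow i).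

Definition sgd_noise (xs : 'cV[R]_N) : R :=
  M%:R^-1 * \sum_(i < M) norm2 (grad_f i xs).

Fixpoint sgd_iter (n : nat) (x0 : 'cV[R]_N) (alpha : nat -> R)
    (omega : {ffun 'I_n.+1 -> 'I_M}) (k : nat) : 'cV[R]_N :=
  match k with
  | 0 => x0
  | k'.+1 => let xk := sgd_iter x0 alpha omega k' in
             xk - alpha k' *: grad_f (omega (inord k')) xk
  end.

End SGD.

(* Discrete probability: uniform measure on the finite sample space
   Omega = {ffun 'I_n.+1 -> 'I_M} of index sequences (i_0,...,i_n), i.i.d. uniform. *)
Section Prob.
Variables (R : realType) (Omega : finType).

Definition expect (Y : Omega -> R) : R :=
  (\sum_(w : Omega) Y w) / #|Omega|%:R.

Definition cond_exp (T : eqType) (Y : Omega -> R) (X : Omega -> T) (w : Omega) : R :=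
  (\sum_(w' : Omega | X w' == X w) Y w') / #|[pred w' | X w' == X w]|%:R.
End Prob.

Section Coeffs.
Variables (R : realType) (M : nat) (Lt cA smax smin sl Fstar sig2 : R).
Variable alpha : nat -> R.
Variable n : nat.

Definition Afac (a : R) : R := 1 - 2 * a * sl ^+ 2.
Definition Bfac (a : R) : R := a ^+ 2 * M%:R * Lt * cA * smax ^+ 2.
Definition Cfac (a : R) : R := 2 * a ^+ 2 * M%:R * Lt * Fstar.
Definition pfac (a : R) : R := 1 - a * smin ^+ 2.
Definition qfac (a : R) : R := 2 * a ^+ 2 * sig2.

Definition Acoef (k : nat) : R := \prod_(k <= i < n.+1) Afac (alpha i).
Definition Bcoef (k : nat) : R :=
  \sum_(k <= j < n.+1)
     (\prod_(j.+1 <= i < n.+1) Afac (alpha i)) * Bfac (alpha j)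
       * (\prod_(k <= i < j) pfac (alpha i)).
Definition Ccoef (k : nat) : R :=
  \sum_(k.+1 <= i < n.+1)
     (qfac (alpha i.-1) * Bcoef i + Acoef i * Cfac (alpha i.-1))
  + Cfac (alpha n).
End Coeffs.

(* Each SGD step contracts in expectation: averaged over the sampled row, the squared
   component of x - x_* along an eigenvector v of A^T A with eigenvalue s^2 shrinks by
   the factor 1 - 2 a s^2 up to errors of order a^2 controlled by ||x - x_*||^2 and F_*,
   while ||x - x_*||^2 itself shrinks by 1 - a s_min^2 up to 2 a^2 sigma^2. Bounds of the
   form a d^2 + b ||x - x_*||^2 + c are therefore preserved by one averaged step, and
   propagating them backward from step n+1 to step k (tower property) produces the
   coefficients A_k, B_k, C_k through their backward recurrences. *)

From HB Require Import structures.
From mathcomp Require Import all_boot all_order all_algebra.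
From mathcomp Require Import reals ring lra zify.
Set Implicit Arguments. Unset Strict Implicit. Unset Printing Implicit Defensive.
Import Order.TTheory GRing.Theory Num.Theory.
Local Open Scope ring_scope.

Section InnerProduct.
Variables (R : realType) (N : nat).
Implicit Types (u w z : 'cV[R]_N) (a : R).

Lemma dotvE u w : dotv u w = (u^T *m w) 0 0.
Proof. by rewrite /dotv !mxE; apply: eq_bigr => i _; rewrite mxE. Qed.

Lemma dotvC u w : dotv u w = dotv w u.
Proof. by apply: eq_bigr => i _; rewrite mulrC. Qed.

Lemma dotvDl u w z : dotv (u + w) z = dotv u z + dotv w z.
Proof. by rewrite /dotv -big_split; apply: eq_bigr => i _; rewrite !mxE mulrDl. Qed.

Lemma dotvZl a u z : dotv (a *: u) z = a * dotv u z.
Proof. by rewrite /dotv mulr_sumr; apply: eq_bigr => i _; rewrite !mxE mulrA. Qed.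

Lemma dotvBl u w z : dotv (u - w) z = dotv u z - dotv w z.
Proof. by rewrite -scaleN1r dotvDl dotvZl mulN1r. Qed.

Lemma dotvDr u w z : dotv z (u + w) = dotv z u + dotv z w.
Proof. by rewrite dotvC dotvDl !(dotvC z). Qed.

Lemma dotvBr u w z : dotv z (u - w) = dotv z u - dotv z w.
Proof. by rewrite dotvC dotvBl !(dotvC z). Qed.

Lemma dotvZr a u z : dotv z (a *: u) = a * dotv z u.
Proof. by rewrite dotvC dotvZl dotvC. Qed.

Lemma norm2_ge0 u : 0 <= norm2 u.
Proof. by apply: sumr_ge0 => i _; rewrite -expr2 sqr_ge0. Qed.

Lemma norm2BZ u w a :
  norm2 (u - a *: w) = norm2 u - 2 * a * dotv u w + a ^+ 2 * norm2 w.
Proof. by rewrite /norm2 !(dotvBl, dotvBr, dotvZl, dotvZr) (dotvC w u); ring. Qed.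

Lemma dotv_unit_sqr_le u w : norm2 w = 1 -> dotv u w ^+ 2 <= norm2 u.
Proof. by move=> hw; have := norm2_ge0 (u - dotv u w *: w); rewrite norm2BZ hw; lra. Qed.

End InnerProduct.

Lemma quad_ge0_lincoef_eq0 (R : realFieldType) (c d : R) :
  0 <= d -> (forall t, 0 <= 2 * t * c + t ^+ 2 * d) -> c = 0.
Proof.
move=> hd hq; set e := (1 + d)^-1.
have he : 0 < e by rewrite invr_gt0; lra.
have hed : e * d = 1 - e by rewrite /e; field; rewrite gt_eqF //; lra.
have := hq (- c * e).
have -> : 2 * (- c * e) * c + (- c * e) ^+ 2 * d = - (c ^+ 2 * e * (1 + e)).
  transitivity (- (c ^+ 2 * e * (2 - e * d))); first by ring.
  by rewrite hed; ring.
rewrite oppr_ge0 => hc; have hc2 : c ^+ 2 <= 0 by nra.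
by apply/eqP; rewrite -sqrf_eq0 eq_le hc2 sqr_ge0.
Qed.

Lemma mean_quad_expand (R : realFieldType) (m : nat) (c t : R) (p q : 'I_m -> R) :
  (0 < m)%N ->
  m%:R^-1 * \sum_i (c - 2 * t * m%:R * p i + t ^+ 2 * m%:R ^+ 2 * q i)
  = c - 2 * t * \sum_i p i + t ^+ 2 * m%:R * \sum_i q i.
Proof.
move=> hm; rewrite !big_split /= sumr_const card_ord sumrN -!mulr_sumr -mulr_natr.
by field; rewrite pnatr_eq0 -lt0n.
Qed.

Lemma mean_affine (R : realFieldType) (m : nat) (a0 b0 c : R) (u w : 'I_m -> R) :
  (0 < m)%N ->
  m%:R^-1 * \sum_i (a0 * u i + b0 * w i + c)
  = a0 * (m%:R^-1 * \sum_i u i) + b0 * (m%:R^-1 * \sum_i w i) + c.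
Proof.
move=> hm; rewrite !big_split /= sumr_const card_ord -!mulr_sumr -mulr_natr.
by field; rewrite pnatr_eq0 -lt0n.
Qed.

Section LeastSquares.
Variables (R : realType) (M N : nat) (A : 'M[R]_(M, N)) (b : 'cV[R]_M).
Implicit Types (x y w : 'cV[R]_N).

Lemma mulmx_entry x i : (A *m x) i 0 = dotv (arow A i) x.
Proof. by rewrite mxE; apply: eq_bigr => j _; rewrite !mxE. Qed.

Lemma dotv_mulmx x y : dotv (A *m x) (A *m y) = dotv x (A^T *m A *m y).
Proof. by rewrite !dotvE trmx_mul !mulmxA. Qed.

Lemma dotv_mulmx_rows x y :
  dotv (A *m x) (A *m y) = \sum_i dotv (arow A i) x * dotv (arow A i) y.
Proof. by apply: eq_bigr => i _; rewrite !mulmx_entry. Qed.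

Lemma dotv_residual x (y : 'cV[R]_M) :
  dotv (A *m x - b) y = \sum_i (dotv (arow A i) x - b i 0) * y i 0.
Proof. by apply: eq_bigr => i _; rewrite mxE [(- b) i 0]mxE mulmx_entry. Qed.

Lemma arow_norm2_le i : norm2 (arow A i) <= Ltilde A.
Proof. exact: (le_bigmax 0 (fun i => norm2 (arow A i)) i). Qed.

Lemma Ltilde_ge0 : 0 <= Ltilde A.
Proof.
by rewrite /Ltilde; elim/big_ind: _ => // [x y hx _ | i _]; rewrite ?le_max ?hx ?norm2_ge0.
Qed.

Variable xs : 'cV[R]_N.
Hypothesis xs_min : forall x, lsF A b xs <= lsF A b x.

Lemma residual_orthogonal y : dotv (A *m xs - b) (A *m y) = 0.
Proof.
apply: (quad_ge0_lincoef_eq0 (norm2_ge0 (A *m y))) => t.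
have := xs_min (xs + t *: y).
rewrite /lsF mulmxDr -scalemxAr addrAC -[t]opprK scaleNr norm2BZ; lra.
Qed.

Lemma residualE x : A *m x - b = A *m (x - xs) + (A *m xs - b).
Proof. by rewrite mulmxBr addrA addrNK. Qed.

Lemma sum_residual_rows x y :
  \sum_i (dotv (arow A i) x - b i 0) * dotv (arow A i) y
  = dotv (A *m (x - xs)) (A *m y).
Proof.
rewrite -(eq_bigr _ (fun i _ => congr1 _ (mulmx_entry y i))) -dotv_residual.
by rewrite residualE dotvDl residual_orthogonal addr0.
Qed.

Lemma norm2_residual x :
  \sum_i (dotv (arow A i) x - b i 0) ^+ 2 = norm2 (A *m (x - xs)) + 2 * lsF A b xs.
Proof.
have -> : \sum_i (dotv (arow A i) x - b i 0) ^+ 2 = norm2 (A *m x - b).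
  rewrite /norm2 dotv_residual; apply: eq_bigr => i _.
  by rewrite mxE [(- b) i 0]mxE mulmx_entry expr2.
rewrite residualE /lsF; move: (residual_orthogonal (x - xs)).
set u := A *m (x - xs); set r0 := A *m xs - b => hur; clearbody u r0.
by rewrite /norm2 dotvDl !dotvDr (dotvC u r0) hur; field.
Qed.

Hypothesis M_gt0 : (0 < M)%N.

Lemma mean_proj_step_le x w (s2 a : R) :
  0 <= a -> norm2 w = 1 -> A^T *m A *m w = s2 *: w ->
  M%:R^-1 * \sum_i dotv (x - a *: grad_f A b i x - xs) w ^+ 2
  <= (1 - 2 * a * s2) * dotv (x - xs) w ^+ 2
     + a ^+ 2 * M%:R * Ltilde A * norm2 (A *m (x - xs))
     + 2 * a ^+ 2 * M%:R * Ltilde A * lsF A b xs.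
Proof.
move=> ha hw heig; set d := dotv (x - xs) w.
pose r i := dotv (arow A i) x - b i 0; pose s i := dotv (arow A i) w.
have hstep i : dotv (x - a *: grad_f A b i x - xs) w ^+ 2
    = d ^+ 2 - 2 * a * M%:R * (d * (r i * s i)) + a ^+ 2 * M%:R ^+ 2 * (r i ^+ 2 * s i ^+ 2).
  by rewrite addrAC dotvBl /grad_f !dotvZl -/d /r /s; ring.
rewrite (eq_bigr _ (fun i _ => hstep i)) mean_quad_expand //.
have hdrift : \sum_i d * (r i * s i) = s2 * d ^+ 2.
  by rewrite -mulr_sumr sum_residual_rows dotv_mulmx heig dotvZr -/d; ring.
have hnoise : \sum_i r i ^+ 2 * s i ^+ 2
    <= Ltilde A * (norm2 (A *m (x - xs)) + 2 * lsF A b xs).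
  rewrite -norm2_residual mulr_sumr; apply: ler_sum => i _.
  rewrite mulrC; apply: ler_wpM2r; first exact: sqr_ge0.
  exact: le_trans (dotv_unit_sqr_le _ hw) (arow_norm2_le i).
have haM : 0 <= a ^+ 2 * M%:R by rewrite mulr_ge0 ?sqr_ge0 ?ler0n.
have := ler_wpM2l haM hnoise; rewrite hdrift; lra.
Qed.

Lemma mean_norm2_step_le x (a s2 : R) :
  0 <= a -> 2 * a * M%:R * Ltilde A <= 1 ->
  s2 * norm2 (x - xs) <= norm2 (A *m (x - xs)) ->
  M%:R^-1 * \sum_i norm2 (x - a *: grad_f A b i x - xs)
  <= (1 - a * s2) * norm2 (x - xs) + 2 * a ^+ 2 * sgd_noise A b xs.
Proof.
move=> ha haL hlo; set e := x - xs; set nA := norm2 (A *m e).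
pose t i := dotv (arow A i) e; pose z i := dotv (arow A i) xs - b i 0.
pose r i := dotv (arow A i) x - b i 0; pose l i := norm2 (arow A i).
have hr i : r i = t i + z i by rewrite /r /t /z /e dotvBr; ring.
have hstep i : norm2 (x - a *: grad_f A b i x - xs)
    = norm2 e - 2 * a * M%:R * (r i * t i) + a ^+ 2 * M%:R ^+ 2 * (r i ^+ 2 * l i).
  rewrite addrAC norm2BZ /grad_f -/e dotvZr /norm2 dotvZl dotvZr (dotvC e).
  by rewrite /r /t /l /norm2; ring.
rewrite (eq_bigr _ (fun i _ => hstep i)) mean_quad_expand // sum_residual_rows -/e.
change (dotv (A *m e) (A *m e)) with nA.
have hsig : sgd_noise A b xs = M%:R * \sum_i z i ^+ 2 * l i.
  rewrite /sgd_noise !mulr_sumr; apply: eq_bigr => i _.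
  rewrite /grad_f /norm2 dotvZl dotvZr /z /l /norm2; field; by rewrite pnatr_eq0 -lt0n.
have hnoise : \sum_i r i ^+ 2 * l i <= 2 * Ltilde A * nA + 2 * \sum_i z i ^+ 2 * l i.
  rewrite /nA /norm2 dotv_mulmx_rows !mulr_sumr -big_split; apply: ler_sum => i _ /=.
  have hl := arow_norm2_le i; have hl0 : 0 <= l i := norm2_ge0 _.
  have h1 : 0 <= (t i - z i) ^+ 2 * l i by rewrite mulr_ge0 ?sqr_ge0.
  have h2 : 0 <= (Ltilde A - l i) * t i ^+ 2 by rewrite mulr_ge0 ?sqr_ge0 ?subr_ge0.
  by rewrite hr -/(t i); nra.
rewrite hsig.
have haM : 0 <= a ^+ 2 * M%:R by rewrite mulr_ge0 ?sqr_ge0 ?ler0n.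
have hnA : 0 <= nA := norm2_ge0 _.
have h1 := ler_wpM2l haM hnoise.
(* The step-size bound lets the drift -2 a ||A e||^2 absorb the variance term
   2 a^2 M L ||A e||^2. *)
have h2 : a * (2 * a * M%:R * Ltilde A) * nA <= a * nA.
  by rewrite ler_wpM2r // ler_piMr.
have h3 : a * (s2 * norm2 e) <= a * nA := ler_wpM2l ha hlo.
lra.
Qed.

End LeastSquares.

Section Spectral.
Variables (R : realType) (M N : nat) (A : 'M[R]_(M, N)).
Variables (sigma : 'I_N -> R) (v : 'I_N -> 'cV[R]_N).
Hypothesis v_orthonormal : forall i j, dotv (v i) (v j) = (i == j)%:R.
Hypothesis v_eigen : forall i, A^T *m A *m v i = sigma i ^+ 2 *: v i.

Let V : 'M[R]_N := \matrix_(i, j) v j i 0.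

Let trV_mulmx e j : (V^T *m e) j 0 = dotv (v j) e.
Proof. by rewrite mxE; apply: eq_bigr => k _; rewrite !mxE. Qed.

Let V_orthogonal : V *m V^T = 1%:M.
Proof.
apply: mulmx1C; apply/matrixP => i j.
by rewrite !mxE -v_orthonormal; apply: eq_bigr => k _; rewrite !mxE.
Qed.

Lemma norm2_eigenbasis e : norm2 e = \sum_j dotv (v j) e ^+ 2.
Proof.
have -> : norm2 e = norm2 (V^T *m e).
  by rewrite /norm2 !dotvE trmx_mul trmxK mulmxA -(mulmxA e^T) V_orthogonal mulmx1.
by apply: eq_bigr => j _; rewrite trV_mulmx expr2.
Qed.

Lemma norm2_mulmx_eigenbasis e :
  norm2 (A *m e) = \sum_j sigma j ^+ 2 * dotv (v j) e ^+ 2.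
Proof.
set D := diag_mx (\row_j sigma j ^+ 2).
have hATA : A^T *m A = V *m D *m V^T.
  have hAV : A^T *m A *m V = V *m D.
    apply/matrixP => i j; rewrite mul_mx_diag !mxE.
    have := congr1 (fun u : 'cV[R]_N => u i 0) (v_eigen j); rewrite /= !mxE mulrC => <-.
    by apply: eq_bigr => k _; rewrite !mxE.
  by rewrite -hAV -mulmxA V_orthogonal mulmx1.
set c := V^T *m e.
have -> : norm2 (A *m e) = (c^T *m D *m c) 0 0.
  by rewrite /norm2 dotv_mulmx dotvE hATA /c trmx_mul trmxK !mulmxA.
rewrite mxE; apply: eq_bigr => j _.
by rewrite -trV_mulmx -/c mul_mx_diag !mxE; ring.
Qed.

Lemma norm2_mulmx_bounds (lo hi : R) e :
  (forall j, lo <= sigma j ^+ 2 <= hi) ->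
  lo * norm2 e <= norm2 (A *m e) <= hi * norm2 e.
Proof.
move=> hsig; rewrite norm2_mulmx_eigenbasis norm2_eigenbasis !mulr_sumr.
by apply/andP; split; apply: ler_sum => j _; have /andP[h1 h2] := hsig j;
  rewrite ler_wpM2r ?sqr_ge0.
Qed.

End Spectral.

Section Sampling.
Variables (R : realType) (M N : nat) (A : 'M[R]_(M, N)) (b : 'cV[R]_M).
Variables (x0 : 'cV[R]_N) (alpha : nat -> R) (n : nat) (f : 'cV[R]_N -> R).

Local Notation Omega := {ffun 'I_n.+1 -> 'I_M}.
Local Notation X k w := (sgd_iter A b x0 alpha w k).
Local Notation Y w := (f (X n.+1 w)).

Definition prefix_event (k : nat) (P : pred Omega) :=
  forall w w' : Omega, (forall t : 'I_n.+1, (t < k)%N -> w t = w' t) -> P w = P w'.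

Lemma sgd_iter_prefix k (w w' : Omega) :
  (forall t : 'I_n.+1, (t < k)%N -> w t = w' t) -> X k w = X k w'.
Proof.
elim: k => [//|k IH] hww' /=.
rewrite IH => [|t ht]; last exact/hww'/ltnW.
by rewrite hww' // ltnS /inord val_insubd; case: ifP.
Qed.

(* [cond_le k phi] is E[Y | i_0, ..., i_(k-1)] <= phi x_k, in the finite form
   obtained by testing against every event that is determined by the first k
   indices and on which x_k is constant. *)
Definition cond_le (k : nat) (phi : 'cV[R]_N -> R) :=
  forall (P : pred Omega) x, prefix_event k P -> (forall w, P w -> X k w = x) ->
    \sum_(w | P w) Y w <= #|P|%:R * phi x.

Lemma cond_le_final : cond_le n.+1 f.
Proof.
move=> P x _ hX; rewrite (eq_bigr (fun _ => f x)) => [|w /hX -> //].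
by rewrite sumr_const mulr_natl.
Qed.

Lemma cond_le_trans k phi psi :
  cond_le k phi -> (forall x, phi x <= psi x) -> cond_le k psi.
Proof.
move=> hphi hle P x hP hX; apply: le_trans (hphi P x hP hX) _.
by rewrite ler_wpM2l.
Qed.

(* The index i_k is independent of i_0, ..., i_(k-1): an event determined by the
   first k indices meets every value of i_k equally often. *)
Lemma slice_card_eq k (P : pred Omega) (i j : 'I_M) : (k <= n)%N -> prefix_event k P ->
  #|[pred w : Omega | P w && (w (inord k) == i)]|
  = #|[pred w : Omega | P w && (w (inord k) == j)]|.
Proof.
move=> hk hP.
suff card_le i' j' : (#|[pred w : Omega | P w && (w (inord k) == i')]|
                     <= #|[pred w : Omega | P w && (w (inord k) == j')]|)%N.
  by apply/eqP; rewrite eqn_leq !card_le.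
pose upd (w : Omega) : Omega := [ffun t => if t == inord k then j' else w t].
have hPupd w : P (upd w) = P w.
  apply: hP => t ht; rewrite ffunE; case: eqP => // et.
  by move: ht; rewrite et inordK ?ltnn // ltnS.
rewrite -(@card_in_imset _ _ upd) => [|w1 w2].
  apply/subset_leq_card/subsetP => _ /imsetP [w hw ->].
  by move: hw; rewrite !inE hPupd ffunE !eqxx andbT => /andP [].
rewrite !inE => /andP [_ /eqP h1] /andP [_ /eqP h2] e.
apply/ffunP => t; have := congr1 (fun g : Omega => g t) e.
by rewrite !ffunE; case: eqP => [->|_] //; rewrite h1 h2.
Qed.

Hypothesis M_gt0 : (0 < M)%N.

Lemma cond_le_step k phi : (k <= n)%N -> cond_le k.+1 phi ->
  cond_le k (fun x => M%:R^-1 * \sum_i phi (x - alpha k *: grad_f A b i x)).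
Proof.
move=> hk hphi P x hP hX; set k' : 'I_n.+1 := inord k.
pose slice (i : 'I_M) := [pred w : Omega | P w && (w k' == i)].
set c := #|slice (Ordinal M_gt0)|.
have card_slice i : #|slice i| = c by apply: slice_card_eq.
have card_P : #|P| = (M * c)%N.
  rewrite -sum1_card (partition_big (fun w : Omega => w k') xpredT) //=.
  rewrite -[M in (M * c)%N]card_ord -sum_nat_const; apply: eq_bigr => i _.
  by rewrite -(card_slice i) -sum1_card.
rewrite (partition_big (fun w : Omega => w k') xpredT) //=.
apply: le_trans (_ : \sum_(i < M) c%:R * phi (x - alpha k *: grad_f A b i x) <= _).
  apply: ler_sum => i _; rewrite -(card_slice i); apply: (hphi (slice i)).
    move=> w w' hww' /=; rewrite (hP w w') => [|t ht]; last exact/hww'/ltnW.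
    by rewrite hww' // inordK.
  by move=> w /andP [/hX hXw /eqP hwi] /=; rewrite hXw hwi.
rewrite card_P natrM -mulr_sumr mulrA (mulrC M%:R) mulfK //.
by rewrite pnatr_eq0 -lt0n.
Qed.

Lemma cond_exp_le k phi (w : Omega) :
  cond_le k phi -> cond_exp (fun w : Omega => Y w) (fun w : Omega => X k w) w <= phi (X k w).
Proof.
move=> hphi; pose P := [pred w' : Omega | X k w' == X k w].
have hP : (0 < #|P|)%N by apply/card_gt0P; exists w; rewrite inE.
rewrite /cond_exp ler_pdivrMr ?ltr0n // mulrC.
apply: hphi => [w1 w2 h12 | w' /eqP //]; by rewrite /= (sgd_iter_prefix h12).
Qed.

Lemma expect_le phi : cond_le 0 phi -> expect (fun w : Omega => Y w) <= phi x0.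
Proof.
move=> hphi; have hO : (0 < #|Omega|)%N.
  by apply/card_gt0P; exists [ffun _ => Ordinal M_gt0].
rewrite /expect ler_pdivrMr ?ltr0n // mulrC.
exact: hphi xpredT x0 (fun _ _ _ => erefl) (fun _ _ => erefl).
Qed.

End Sampling.

Section CoefficientRecurrences.
Variables (R : realType) (M : nat) (Lt cA smax smin sl Fstar sig2 : R).
Variables (alpha : nat -> R) (n : nat).
Local Notation Ak := (Acoef sl alpha n).
Local Notation Bk := (Bcoef M Lt cA smax smin sl alpha n).
Local Notation Ck := (Ccoef M Lt cA smax smin sl Fstar sig2 alpha n).

Lemma Acoef_last : Ak n.+1 = 1.
Proof. by rewrite /Acoef big_geq. Qed.

Lemma Bcoef_last : Bk n.+1 = 0.
Proof. by rewrite /Bcoef big_geq. Qed.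

Lemma Ccoef_n : Ck n = Cfac M Lt Fstar (alpha n).
Proof. by rewrite /Ccoef big_geq // add0r. Qed.

Lemma AcoefS k : (k <= n)%N -> Ak k = Afac sl (alpha k) * Ak k.+1.
Proof. by move=> hk; rewrite /Acoef big_ltn. Qed.

Lemma BcoefS k : (k <= n)%N ->
  Bk k = Ak k.+1 * Bfac M Lt cA smax (alpha k) + pfac smin (alpha k) * Bk k.+1.
Proof.
move=> hk; rewrite /Bcoef big_ltn // [\prod_(k <= i < k) _]big_geq // mulr1.
congr (_ + _).
rewrite mulr_sumr; apply: eq_big_nat => j /andP [hj _].
by rewrite (big_ltn hj); ring.
Qed.

Lemma CcoefS k : (k < n)%N ->
  Ck k = qfac sig2 (alpha k) * Bk k.+1 + Ak k.+1 * Cfac M Lt Fstar (alpha k) + Ck k.+1.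
Proof. by move=> hk; rewrite /Ccoef big_ltn //=; ring. Qed.

End CoefficientRecurrences.

Section BackwardInduction.
Variables (R : realType) (M N : nat) (A : 'M[R]_(M, N)) (b : 'cV[R]_M).
Variables (sigma : 'I_N -> R) (v : 'I_N -> 'cV[R]_N) (xs x0 : 'cV[R]_N).
Variables (alpha : nat -> R) (l : 'I_N) (n : nat).
Hypothesis N_le_M : (N <= M)%N.
Hypothesis sigma_gt0 : forall i, 0 < sigma i.
Hypothesis v_orthonormal : forall i j, dotv (v i) (v j) = (i == j)%:R.
Hypothesis v_eigen : forall i, A^T *m A *m v i = sigma i ^+ 2 *: v i.
Hypothesis xs_min : forall x, lsF A b xs <= lsF A b x.
Hypothesis alpha_bound : forall k, 0 < alpha k /\ alpha k <= (2 * M%:R * Ltilde A)^-1.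

Let smax := \big[Num.max/0]_(i < N) sigma i.
Let smin := \big[Num.min/smax]_(i < N) sigma i.
Let cA := smax ^+ 2 / smin ^+ 2.
Let Lt := Ltilde A.
Local Notation Af a := (Afac (sigma l) a).
Local Notation Bf a := (Bfac M Lt cA smax a).
Local Notation Cf a := (Cfac M Lt (lsF A b xs) a).
Local Notation pf a := (pfac smin a).
Local Notation qf a := (qfac (sgd_noise A b xs) a).
Local Notation Ak := (Acoef (sigma l) alpha n).
Local Notation Bk := (Bcoef M Lt cA smax smin (sigma l) alpha n).
Local Notation Ck := (Ccoef M Lt cA smax smin (sigma l) (lsF A b xs) (sgd_noise A b xs) alpha n).

Let bound (a0 b0 c : R) (x : 'cV[R]_N) :=
  a0 * dotv (x - xs) (v l) ^+ 2 + b0 * norm2 (x - xs) + c.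
Local Notation cond_le_proj :=
  (cond_le A b x0 alpha n (fun x => dotv (x - xs) (v l) ^+ 2)).

Let M_gt0 : (0 < M)%N := leq_trans (leq_ltn_trans (leq0n _) (ltn_ord l)) N_le_M.

Let v_unit : norm2 (v l) = 1.
Proof. by rewrite /norm2 v_orthonormal eqxx. Qed.

Let alpha_gt0 k : 0 < alpha k. Proof. exact: (alpha_bound k).1. Qed.

Let alpha_small k : 2 * alpha k * M%:R * Lt <= 1.
Proof.
have [ha hle] := alpha_bound k.
have hL : 0 < 2 * M%:R * Lt.
  rewrite lt_def !mulr_ge0 ?ler0n ?Ltilde_ge0 // andbT.
  by apply: contraTneq hle => ->; rewrite invr0 -ltNge.
by move: hle; rewrite -(ler_pM2r hL) mulVf ?gt_eqF // -/Lt => h; apply: le_trans h; lra.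
Qed.

Let sigma_bounds j : smin <= sigma j <= smax.
Proof. by rewrite (bigmin_le smax j sigma) (le_bigmax 0 sigma j). Qed.

Let smin_gt0 : 0 < smin.
Proof.
rewrite /smin; elim/big_ind: _ => [|x y hx hy|i _]; last exact: sigma_gt0.
  by have /andP [_ hl] := sigma_bounds l; apply: lt_le_trans hl.
by rewrite lt_min hx.
Qed.

Let sigma_l_sqr_le : sigma l ^+ 2 <= M%:R * Lt.
Proof.
have -> : sigma l ^+ 2 = norm2 (A *m v l).
  by rewrite /norm2 dotv_mulmx v_eigen dotvZr -/(norm2 _) v_unit mulr1.
rewrite /norm2 dotv_mulmx_rows mulr_natl -[X in Lt *+ X](card_ord M) -sumr_const.
apply: ler_sum => i _; rewrite -expr2.
exact: le_trans (dotv_unit_sqr_le _ v_unit) (arow_norm2_le A i).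
Qed.

Let norm2_err_bounds e :
  smin ^+ 2 * norm2 e <= norm2 (A *m e) <= cA * smax ^+ 2 * norm2 e.
Proof.
have hsig j : smin ^+ 2 <= sigma j ^+ 2 <= smax ^+ 2.
  have /andP [h1 h2] := sigma_bounds j; have h0 := smin_gt0.
  by apply/andP; split; nra.
have hcA : 1 <= cA.
  have /andP [h1 h2] := sigma_bounds l; have h0 := smin_gt0.
  by rewrite /cA ler_pdivlMr ?exprn_gt0 // mul1r; nra.
have /andP [-> h] := norm2_mulmx_bounds v_orthonormal v_eigen e hsig.
apply: le_trans h _; rewrite -mulrA; apply: ler_peMl hcA.
exact: mulr_ge0 (sqr_ge0 _) (norm2_ge0 _).
Qed.

Let Afac_ge0 k : 0 <= Af (alpha k).
Proof.
have := alpha_small k; have := alpha_gt0 k; have := sigma_l_sqr_le.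
by rewrite /Afac; nra.
Qed.

Let pfac_ge0 k : 0 <= pf (alpha k).
Proof.
have := alpha_small k; have := alpha_gt0 k; have := sigma_l_sqr_le.
have /andP [h1 _] := sigma_bounds l; have := smin_gt0.
by rewrite /pfac; nra.
Qed.

Let Bfac_ge0 k : 0 <= Bf (alpha k).
Proof.
have hcA : 0 <= cA by rewrite /cA divr_ge0 ?sqr_ge0.
exact: mulr_ge0 (mulr_ge0 (mulr_ge0 (mulr_ge0 (sqr_ge0 _) (ler0n _ _))
  (Ltilde_ge0 _)) hcA) (sqr_ge0 _).
Qed.

Let Acoef_ge0 k : 0 <= Ak k.
Proof. by apply: prodr_ge0 => i _; apply: Afac_ge0. Qed.

Let Bcoef_ge0 k : 0 <= Bk k.
Proof.
apply: sumr_ge0 => j _; apply: mulr_ge0; last by apply: prodr_ge0 => i _; apply: pfac_ge0.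
by apply: mulr_ge0; [apply: prodr_ge0 => i _; apply: Afac_ge0 | apply: Bfac_ge0].
Qed.

Let mean_proj_step k x :
  M%:R^-1 * \sum_i dotv (x - alpha k *: grad_f A b i x - xs) (v l) ^+ 2
  <= Af (alpha k) * dotv (x - xs) (v l) ^+ 2 + Bf (alpha k) * norm2 (x - xs)
     + Cf (alpha k).
Proof.
have hu := mean_proj_step_le xs_min M_gt0 x (ltW (alpha_gt0 k)) v_unit (v_eigen l).
have /andP [_ hhi] := norm2_err_bounds (x - xs).
have haML : 0 <= alpha k ^+ 2 * M%:R * Lt.
  exact: mulr_ge0 (mulr_ge0 (sqr_ge0 _) (ler0n _ _)) (Ltilde_ge0 _).
have := ler_wpM2l haML hhi; move: hu; rewrite /Afac /Bfac /Cfac -/Lt; lra.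
Qed.

Let mean_norm2_step k x :
  M%:R^-1 * \sum_i norm2 (x - alpha k *: grad_f A b i x - xs)
  <= pf (alpha k) * norm2 (x - xs) + qf (alpha k).
Proof.
have /andP [hlo _] := norm2_err_bounds (x - xs).
by have := mean_norm2_step_le xs_min M_gt0 (ltW (alpha_gt0 k)) (alpha_small k) hlo.
Qed.

Let cond_le_bound_step k a0 b0 c : (k <= n)%N -> 0 <= a0 -> 0 <= b0 ->
  cond_le_proj k.+1 (bound a0 b0 c) ->
  cond_le_proj k (bound (Af (alpha k) * a0) (a0 * Bf (alpha k) + pf (alpha k) * b0)
                        (qf (alpha k) * b0 + a0 * Cf (alpha k) + c)).
Proof.
move=> hk ha0 hb0 hc; have := cond_le_trans (cond_le_step M_gt0 hk hc); apply => x.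
rewrite /bound /= mean_affine //.
have := ler_wpM2l ha0 (mean_proj_step k x); have := ler_wpM2l hb0 (mean_norm2_step k x).
lra.
Qed.

Lemma cond_le_coef k : (k <= n)%N -> cond_le_proj k (bound (Ak k) (Bk k) (Ck k)).
Proof.
move=> hk; rewrite -(subKn hk); elim: (n - k)%N (leq_subr k n) => [_ | d IH hd].
  rewrite subn0 AcoefS // BcoefS // Acoef_last Bcoef_last Ccoef_n.
  have hfinal : cond_le_proj n.+1 (bound 1 0 0).
    have := cond_le_trans (@cond_le_final _ _ _ A b x0 alpha n _).
    by apply => x; rewrite /bound; lra.
  have := cond_le_trans (cond_le_bound_step (leqnn n) ler01 (lexx 0) hfinal).
  by apply => x; rewrite /bound; lra.
set k' := (n - d.+1)%N; have hk' : (k' < n)%N by rewrite /k'; lia.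
have := IH (ltnW hd); rewrite (_ : n - d = k'.+1)%N; last by rewrite /k'; lia.
move=> /(cond_le_bound_step (ltnW hk') (Acoef_ge0 _) (Bcoef_ge0 _)).
by rewrite -AcoefS ?(ltnW hk') // -BcoefS ?(ltnW hk') // -CcoefS.
Qed.

End BackwardInduction.

Theorem lemma11 (R : realType) (M N : nat) (A : 'M[R]_(M, N)) (b : 'cV[R]_M)
  (sigma : 'I_N -> R) (v : 'I_N -> 'cV[R]_N) (xs x0 : 'cV[R]_N)
  (alpha : nat -> R) (l : 'I_N) (n : nat) :
  (N <= M)%N ->
  \rank A = N ->
  (forall i j : 'I_N, (i <= j)%N -> sigma j <= sigma i) ->
  (forall i, 0 < sigma i) ->
  (forall i j, dotv (v i) (v j) = (i == j)%:R) ->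
  (forall i, A^T *m A *m v i = sigma i ^+ 2 *: v i) ->
  (forall x, lsF A b xs <= lsF A b x) ->
  (forall k, 0 < alpha k /\ alpha k <= (2 * M%:R * Ltilde A)^-1) ->
  let smax := \big[Num.max/0]_(i < N) sigma i in
  let smin := \big[Num.min/smax]_(i < N) sigma i in
  let cA := smax ^+ 2 / smin ^+ 2 in
  let Fstar := lsF A b xs in
  let sig2 := sgd_noise A b xs in
  let Ak := Acoef (sigma l) alpha n in
  let Bk := Bcoef M (Ltilde A) cA smax smin (sigma l) alpha n in
  let Ck := Ccoef M (Ltilde A) cA smax smin (sigma l) Fstar sig2 alpha n in
  let X (k : nat) (w : {ffun 'I_n.+1 -> 'I_M}) := sgd_iter A b x0 alpha w k in
  let Y (w : {ffun 'I_n.+1 -> 'I_M}) := dotv (X n.+1 w - xs) (v l) ^+ 2 in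
  (forall k, (k <= n)%N -> forall w : {ffun 'I_n.+1 -> 'I_M},
     cond_exp Y (X k) w <=
       Ak k * dotv (X k w - xs) (v l) ^+ 2 + Bk k * norm2 (X k w - xs) + Ck k)
  /\
  expect Y <= Ak 0%N * dotv (x0 - xs) (v l) ^+ 2 + Bk 0%N * norm2 (x0 - xs) + Ck 0%N.
Proof.
move=> hNM _ _ hpos hon heig hmin hstep smax smin cA Fstar sig2 Ak Bk Ck X Y.
have hM : (0 < M)%N := leq_trans (leq_ltn_trans (leq0n _) (ltn_ord l)) hNM.
split => [k hk w|].
  exact: cond_exp_le w (cond_le_coef l hNM hpos hon heig hmin hstep hk).
exact (expect_le hM (cond_le_coef l hNM hpos hon heig hmin hstep (leq0n n))).
Qed.
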